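(* Let $n\ge 3$ and $a<b<c$ be elements of $\mathcal{C}_n$, and let $\triangle=\triangle^{(n)}\{a,b,c\}$. Define the following subsets of $\triangle$ (each described by the triple $(\alpha(a),\alpha(b),\alpha(c))$): $N^{[a]}=\{\alpha\in\triangle:\ \alpha^m=\overline{a}\text{ for some } m\ge1\}$ (equivalently $(\alpha(a),\alpha(b),\alpha(c))\in\{(a,a,a),(a,a,b)\}$); $N^{[b]}=\{\alpha\in\triangle:\ \alpha^m=\overline{b}\text{ for some } m\ge1\}$ (equivalently the triple is $(b,b,b)$); $N^{[c]}=\{\alpha\in\triangle:\ \alpha^m=\overline{c}\text{ for some } m\ge1\}$ (equivalently the triple is $(b,c,c)$ or $(c,c,c)$); $L_{par}=\{\alpha\in\triangle:\ \alpha(a)=a,\ \alpha(b)=\alpha(c)=b\}$; $R_{par}=\{\alpha\in\triangle:\ \alpha(a)=\alpha(b)=b,\ \alpha(c)=c\}$; $L_{\triangle}=\{\alpha\in\triangle:\ \alpha(a)=\alpha(b)=a,\ \alpha(c)=c\}$; $R_{\triangle}=\{\alpha\in\triangle:\ \alpha(a)=a,\ \alpha(b)=\alpha(c)=c\}$; $\mathcal{RI}$ = the set of right identities of $\triangle$. Then each of these eight sets is a subsemiring of $\triangle$, and $\triangle$ is the disjoint union of these eight sets.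
   Context: $\mathcal{C}_n=\{0,1,\dots,n-1\}$ is the chain with its usual order, a join-semilattice with $x\vee y=\max(x,y)$. $\widehat{\mathcal{E}}_{\mathcal{C}_n}$ is the set of all order-preserving maps $\alpha:\mathcal{C}_n\to\mathcal{C}_n$ (not required to fix $0$), a semiring with $(\alpha+\beta)(x)=\max(\alpha(x),\beta(x))$ and $(\alpha\cdot\beta)(x)=\beta(\alpha(x))$ (''first $\alpha$, then $\beta$''); powers $\alpha^m$ are taken with respect to this product. $\overline{x}$ is the constant map with value $x$. The triangle $\triangle^{(n)}\{a,b,c\}$ is the subsemiring of all $\alpha\in\widehat{\mathcal{E}}_{\mathcal{C}_n}$ with image contained in $\{a,b,c\}$. A right identity of $\triangle$ is $e\in\triangle$ with $\alpha\cdot e=\alpha$ for all $\alpha\in\triangle$ (these are exactly the $\alpha\in\triangle$ with $\alpha(a)=a,\alpha(b)=b,\alpha(c)=c$). A subsemiring is a nonempty subset closed under $+$ and $\cdot$. *)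

From mathcomp Require Import all_boot.
Set Implicit Arguments. Unset Strict Implicit. Unset Printing Implicit Defensive.

(* Maps C_n -> C_n, with C_n = 'I_n ordered by the usual order on nat. *)
Definition emap (n : nat) := {ffun 'I_n -> 'I_n}.

Definition order_pres (n : nat) (al : emap n) : Prop :=
  forall x y : 'I_n, x <= y -> al x <= al y.

Definition eadd (n : nat) (al be : emap n) : emap n :=
  [ffun x => if al x <= be x then be x else al x].

Definition emul (n : nat) (al be : emap n) : emap n :=
  [ffun x => be (al x)].

Definition eid (n : nat) : emap n := [ffun x => x].

Definition epow (n : nat) (al : emap n) (m : nat) : emap n :=
  iter m (fun g => emul g al) (eid n).

Definition ecst (n : nat) (x : 'I_n) : emap n := [ffun => x].

Definition in_triangle (n : nat) (a b c : 'I_n) (al : emap n) : Prop :=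
  order_pres al /\ forall x, al x = a \/ al x = b \/ al x = c.

Definition subsemiring_of_triangle (n : nat) (a b c : 'I_n)
    (S : emap n -> Prop) : Prop :=
  (exists al, S al) /\
  (forall al, S al -> in_triangle a b c al) /\
  (forall al be, S al -> S be -> S (eadd al be)) /\
  (forall al be, S al -> S be -> S (emul al be)).

Definition Npow (n : nat) (a b c : 'I_n) (x : 'I_n) (al : emap n) : Prop :=
  in_triangle a b c al /\ exists m, 0 < m /\ epow al m = ecst x.

Definition Lpar (n : nat) (a b c : 'I_n) (al : emap n) : Prop :=
  in_triangle a b c al /\ al a = a /\ al b = b /\ al c = b.
Definition Rpar (n : nat) (a b c : 'I_n) (al : emap n) : Prop :=
  in_triangle a b c al /\ al a = b /\ al b = b /\ al c = c.
Definition Ltri (n : nat) (a b c : 'I_n) (al : emap n) : Prop :=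
  in_triangle a b c al /\ al a = a /\ al b = a /\ al c = c.
Definition Rtri (n : nat) (a b c : 'I_n) (al : emap n) : Prop :=
  in_triangle a b c al /\ al a = a /\ al b = c /\ al c = c.

Definition RI (n : nat) (a b c : 'I_n) (e : emap n) : Prop :=
  in_triangle a b c e /\
  forall al, in_triangle a b c al -> emul al e = al.

Inductive piece := PNa | PNb | PNc | PLpar | PRpar | PLtri | PRtri | PRI.

Definition piece_set (n : nat) (a b c : 'I_n) (p : piece) : emap n -> Prop :=
  match p with
  | PNa => Npow a b c a
  | PNb => Npow a b c b
  | PNc => Npow a b c c
  | PLpar => Lpar a b c
  | PRpar => Rpar a b c
  | PLtri => Ltri a b c
  | PRtri => Rtri a b c
  | PRI => RI a b c
  end.

From mathcomp Require Import all_boot zify.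
Set Implicit Arguments. Unset Strict Implicit. Unset Printing Implicit Defensive.

(* For the eight sets, an element [al] of the triangle only matters through
   its triple [(al a, al b, al c)], a nondecreasing triple over [a < b < c];
   there are ten of them.  The sets not defined by triples are brought to
   this form: some power of [al] is the constant [x] exactly when [x] is the
   only point of [{a, b, c}] fixed by [al] (fixed points survive all powers,
   and otherwise [al^3] already collapses the triangle onto [x]); [al] is a
   right identity exactly when it fixes [a], [b] and [c] (test it against the
   constant maps).  As [al + be] and [al be] take at [a], [b], [c] values
   determined by the two triples, closure and the partition become a check
   over the ten triples. *)

Section MapOperations.

Variable n : nat.
Implicit Types (al be : emap n) (a b c x : 'I_n).

Lemma order_pres_eadd al be :
  order_pres al -> order_pres be -> order_pres (eadd al be).
Proof.
move=> o o' x y xy; rewrite !ffunE; have := o x y xy; have := o' x y xy.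
by do !case: ifP => ? //; lia.
Qed.

Lemma order_pres_emul al be :
  order_pres al -> order_pres be -> order_pres (emul al be).
Proof. by move=> o o' x y xy; rewrite !ffunE; apply/o'/o. Qed.

Lemma in_triangle_eadd a b c al be :
  in_triangle a b c al -> in_triangle a b c be ->
  in_triangle a b c (eadd al be).
Proof.
case=> o f [o' f']; split; first exact: order_pres_eadd.
by move=> x; rewrite ffunE; case: ifP.
Qed.

Lemma in_triangle_emul a b c al be :
  in_triangle a b c al -> in_triangle a b c be ->
  in_triangle a b c (emul al be).
Proof.
case=> o f [o' f']; split; first exact: order_pres_emul.
by move=> x; rewrite ffunE.
Qed.

Lemma in_triangle_ecst a b c x :
  x = a \/ x = b \/ x = c -> in_triangle a b c (ecst x).
Proof. by move=> hx; split=> [y z _|y]; rewrite !ffunE. Qed.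

Lemma epow_fixed al z m : al z = z -> epow al m z = z.
Proof.
move=> alz; elim: m => [|m IHm]; first by rewrite /epow /= ffunE.
by rewrite /epow iterS -/(epow al m) ffunE IHm.
Qed.

End MapOperations.

Definition piece_triple n (a b c : 'I_n) (p : piece) (x y z : 'I_n) : bool :=
  match p with
  | PNa => [&& x == a, y == a & (z == a) || (z == b)]
  | PNb => [&& x == b, y == b & z == b]
  | PNc => [&& (x == b) || (x == c), y == c & z == c]
  | PLpar => [&& x == a, y == b & z == b]
  | PRpar => [&& x == b, y == b & z == c]
  | PLtri => [&& x == a, y == a & z == c]
  | PRtri => [&& x == a, y == c & z == c]
  | PRI => [&& x == a, y == b & z == c]
  end.

Ltac split_bool_hyps := repeat match goal with
  | H : is_true (_ && _) |- _ => case/andP: H => ? ?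
  | H : is_true (_ || _) |- _ => case/orP: H => ?
  | H : is_true (_ == _) |- _ => move/eqP: H => ?
  end.

Ltac rewrite_hyps := repeat match goal with
  | H : ?l = ?r |- context[?l] => rewrite H
  end.

Section Triangle.

Variables (n : nat) (a b c : 'I_n).
Hypotheses (hab : a < b) (hbc : b < c).
Implicit Types (al be : emap n) (x : 'I_n).

Let hac : a < c. Proof. exact: ltn_trans hab hbc. Qed.
Let lab : (a <= b) = true. Proof. exact: ltnW. Qed.
Let lbc : (b <= c) = true. Proof. exact: ltnW. Qed.
Let lac : (a <= c) = true. Proof. exact: ltnW. Qed.
Let lba : (b <= a) = false. Proof. by rewrite leqNgt hab. Qed.
Let lcb : (c <= b) = false. Proof. by rewrite leqNgt hbc. Qed.
Let lca : (c <= a) = false. Proof. by rewrite leqNgt hac. Qed.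
Let eab : (a == b) = false. Proof. by apply/negbTE; rewrite neq_ltn hab. Qed.
Let eba : (b == a) = false. Proof. by apply/negbTE; rewrite neq_ltn hab orbT. Qed.
Let ebc : (b == c) = false. Proof. by apply/negbTE; rewrite neq_ltn hbc. Qed.
Let ecb : (c == b) = false. Proof. by apply/negbTE; rewrite neq_ltn hbc orbT. Qed.
Let eac : (a == c) = false. Proof. by apply/negbTE; rewrite neq_ltn hac. Qed.
Let eca : (c == a) = false. Proof. by apply/negbTE; rewrite neq_ltn hac orbT. Qed.

Ltac abc_simpl :=
  rewrite /= ?leqnn ?eqxx ?lab ?lbc ?lac ?lba ?lcb ?lca
          ?eab ?eba ?ebc ?ecb ?eac ?eca /= ?eqxx /=.

Lemma triangle_cases al (G : Prop) : in_triangle a b c al ->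
  (al a = a -> al b = a -> al c = a -> G) ->
  (al a = a -> al b = a -> al c = b -> G) ->
  (al a = a -> al b = a -> al c = c -> G) ->
  (al a = a -> al b = b -> al c = b -> G) ->
  (al a = a -> al b = b -> al c = c -> G) ->
  (al a = a -> al b = c -> al c = c -> G) ->
  (al a = b -> al b = b -> al c = b -> G) ->
  (al a = b -> al b = b -> al c = c -> G) ->
  (al a = b -> al b = c -> al c = c -> G) ->
  (al a = c -> al b = c -> al c = c -> G) -> G.
Proof.
case=> o f H1 H2 H3 H4 H5 H6 H7 H8 H9 H10; move: (o a b lab) (o b c lbc).
case: (f a) => [Ea|[Ea|Ea]]; case: (f b) => [Eb|[Eb|Eb]];
  case: (f c) => [Ec|[Ec|Ec]]; rewrite Ea Eb Ec; abc_simpl; by auto.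
Qed.

Definition step_map (t1 t2 t3 : 'I_n) : emap n :=
  [ffun y : 'I_n => if y <= a then t1 else if y <= b then t2 else t3].

Lemma step_mapE (t1 t2 t3 : 'I_n) :
  [/\ step_map t1 t2 t3 a = t1, step_map t1 t2 t3 b = t2
    & step_map t1 t2 t3 c = t3].
Proof. by rewrite !ffunE; abc_simpl. Qed.

Lemma step_map_in_triangle (t1 t2 t3 : 'I_n) :
  t1 <= t2 -> t2 <= t3 -> t1 = a \/ t1 = b \/ t1 = c ->
  t2 = a \/ t2 = b \/ t2 = c -> t3 = a \/ t3 = b \/ t3 = c ->
  in_triangle a b c (step_map t1 t2 t3).
Proof.
move=> h12 h23 i1 i2 i3; split=> [x y xy|x]; rewrite !ffunE;
  by do !case: ifP => ? //; lia.
Qed.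

Lemma Npow_fixed_points x al : x = a \/ x = b \/ x = c ->
  Npow a b c x al <->
  in_triangle a b c al /\
  [&& (al a == a) ==> (a == x), (al b == b) ==> (b == x)
    & (al c == c) ==> (c == x)].
Proof.
move=> hx; split.
  case=> t [m [_ alm]]; split=> //.
  have fixed_x z : al z = z -> z = x.
    by move=> alz; have := epow_fixed m alz; rewrite alm ffunE.
  by apply/and3P; split; apply/implyP => /eqP/fixed_x ->.
case=> t /and3P[ha hb hc]; split=> //; exists 3; split=> //.
apply/ffunP=> y; rewrite /epow /= !ffunE.
have [_ f] := t.
move: ha hb hc; apply: (triangle_cases t) => Ea Eb Ec; rewrite_hyps; abc_simpl;
  case: hx => [->|[->|->]]; abc_simpl => // _ _ _;
  by case: (f y) => [->|[->|->]]; rewrite_hyps.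
Qed.

Lemma RI_fixed_points al :
  RI a b c al <-> in_triangle a b c al /\ [/\ al a = a, al b = b & al c = c].
Proof.
split=> -[t h]; split=> //.
  have at_cst x : x = a \/ x = b \/ x = c -> al x = x.
    by move=> hx; have := congr1 (fun f : emap n => f a)
      (h _ (in_triangle_ecst hx)); rewrite !ffunE.
  by split; apply: at_cst; auto.
case: h => Ea Eb Ec be [_ f]; apply/ffunP=> y; rewrite ffunE.
by case: (f y) => [->|[->|->]].
Qed.

Lemma piece_setE p al :
  piece_set a b c p al <->
  in_triangle a b c al /\ piece_triple a b c p (al a) (al b) (al c).
Proof.
have eq3 (x y z : 'I_n) P : (P <-> [/\ al a = x, al b = y & al c = z]) ->
    (in_triangle a b c al /\ P <->
     in_triangle a b c al /\ [&& al a == x, al b == y & al c == z]).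
  by move=> ->; split=> -[t h]; split=> //;
    [case: h => -> -> ->; rewrite !eqxx | case/and3P: h => /eqP-> /eqP-> /eqP->].
case: p => /=.
1-3: apply: iff_trans (Npow_fixed_points al _) _; auto;
  by split=> -[t h]; split=> //; move: h;
     apply: (triangle_cases t) => Ea Eb Ec; rewrite_hyps; abc_simpl.
1-4: by apply: eq3; split=> [[-> [-> ->]]|[-> -> ->]].
by apply: iff_trans (RI_fixed_points al) _; apply: eq3.
Qed.

Lemma piece_set_nonempty p : exists al, piece_set a b c p al.
Proof.
have step_witness (t1 t2 t3 : 'I_n) : t1 <= t2 -> t2 <= t3 ->
    t1 = a \/ t1 = b \/ t1 = c -> t2 = a \/ t2 = b \/ t2 = c ->
    t3 = a \/ t3 = b \/ t3 = c -> forall q, piece_triple a b c q t1 t2 t3 ->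
    exists al, piece_set a b c q al.
  move=> h12 h23 i1 i2 i3 q tp; exists (step_map t1 t2 t3); apply/piece_setE.
  by case: (step_mapE t1 t2 t3) => -> -> ->; split; first exact: step_map_in_triangle.
case: p; [ apply: (step_witness a a a) | apply: (step_witness b b b)
  | apply: (step_witness c c c) | apply: (step_witness a b b)
  | apply: (step_witness b b c) | apply: (step_witness a a c)
  | apply: (step_witness a c c) | apply: (step_witness a b c) ];
  abc_simpl; auto.
Qed.

Lemma piece_set_eadd p al be :
  piece_set a b c p al -> piece_set a b c p be ->
  piece_set a b c p (eadd al be).
Proof.
move=> /piece_setE[t h] /piece_setE[t' h']; apply/piece_setE.
split; first exact: in_triangle_eadd.
by rewrite !ffunE; move: h h'; case: p => /= h h';
  split_bool_hyps; rewrite_hyps; abc_simpl.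
Qed.

Lemma piece_set_emul p al be :
  piece_set a b c p al -> piece_set a b c p be ->
  piece_set a b c p (emul al be).
Proof.
move=> /piece_setE[t h] /piece_setE[t' h']; apply/piece_setE.
split; first exact: in_triangle_emul.
by rewrite !ffunE; move: h h'; case: p => /= h h';
  split_bool_hyps; rewrite_hyps; abc_simpl.
Qed.

Lemma piece_set_subsemiring p :
  subsemiring_of_triangle a b c (piece_set a b c p).
Proof.
split; first exact: piece_set_nonempty.
split; first by move=> al /piece_setE[].
by split; [exact: piece_set_eadd | exact: piece_set_emul].
Qed.

Lemma in_triangle_piece_set al :
  in_triangle a b c al <-> exists p, piece_set a b c p al.
Proof.
split=> [t|[p /piece_setE[] //]].
suff [p tp] : exists p, piece_triple a b c p (al a) (al b) (al c).
  by exists p; apply/piece_setE.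
apply: (triangle_cases t) => Ea Eb Ec; rewrite_hyps;
  [ exists PNa | exists PNa | exists PLtri | exists PLpar | exists PRI
  | exists PRtri | exists PNb | exists PRpar | exists PNc | exists PNc ];
  by abc_simpl.
Qed.

Lemma piece_set_inj p q al :
  piece_set a b c p al -> piece_set a b c q al -> p = q.
Proof.
move=> /piece_setE[t hp] /piece_setE[_ hq]; move: hp hq.
by apply: (triangle_cases t) => Ea Eb Ec; rewrite_hyps; case: p; case: q;
  abc_simpl.
Qed.

End Triangle.

Theorem theorem40 (n : nat) (a b c : 'I_n) :
  3 <= n -> a < b -> b < c ->
  (forall p : piece, subsemiring_of_triangle a b c (piece_set a b c p)) /\
  (forall al : emap n, in_triangle a b c al <->
     exists p : piece, piece_set a b c p al) /\
  (forall (p q : piece) (al : emap n),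
     piece_set a b c p al -> piece_set a b c q al -> p = q).
Proof.
move=> _ hab hbc; split; first exact: piece_set_subsemiring.
split; first exact: in_triangle_piece_set.
exact: piece_set_inj.
Qed.
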